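(* Let $\mathcal V$ be a congruence class and $\mathcal F$ a fragment of MSO such that for every finite alphabet $\Sigma$, a language $L\subseteq\Sigma^*$ is definable by an $\mathcal F$-sentence over $\Sigma$ if and only if it is recognized by a congruence in $\mathcal V(\Sigma)$. Assume moreover that $\mathcal F$ satisfies: (1) for every alphabet $\Sigma$, a set $P$ of pointed words over $\Sigma$ is defined by an $\mathcal F_{\mathsf c}$-sentence over $\Sigma$ iff the language $\{\mathrm{enc}(w,i):(w,i)\in P\}$ over $\Sigma\uplus\dot\Sigma$ is definable by an $\mathcal F$-sentence over $\Sigma\uplus\dot\Sigma$; (2) a language over $\Sigma$ is definable by an $\mathcal F$-sentence over $\Sigma$ iff it is definable by an $\mathcal F$-sentence over any alphabet $\Sigma\cup\Gamma\supseteq\Sigma$; (3) for any $\mathcal F$-definable languages $L_1,L_2\subseteq\Sigma^*$ and a fresh letter $\sharp\notin\Sigma$, the language $L_1\sharp L_2$ is $\mathcal F$-definable over $\Sigma\uplus\{\sharp\}$; (4) $\{\varepsilon\}$ is $\mathcal F$-definable. Then a transduction $f:\Sigma^+\to\Sigma^*$ is $\mathcal V$-rational if and only if it is $\mathcal F$-definable (by an $\mathcal F$-transducer).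
   Context: Words are logical structures over the signature $\{(\sigma(x))_{\sigma\in\Sigma},x<y\}$ (domain = positions, $\sigma$ = positions labelled $\sigma$, $<$ the order). MSO formulas: $\phi::=\exists X\phi\mid\exists x\phi\mid\phi\wedge\phi\mid\neg\phi\mid x\in X\mid\sigma(x)\mid x<y$ (and $x=y$). A logical fragment $\mathcal F$ is a subset of MSO formulas; an $\mathcal F$-language is one defined by an $\mathcal F$-sentence. A pointed word is a pair $(w,i)$ with $w$ non-empty and $i$ a position of $w$; it is a structure over the signature extended by a constant $\mathsf c$ interpreted as $i$. $\mathcal F_{\mathsf c}$ is the set of formulas obtained from $\mathcal F$-formulas by replacing some occurrences of first-order variables inside atomic predicates by $\mathsf c$. $\dot\Sigma=\{\dot\sigma:\sigma\in\Sigma\}$ is a disjoint copy of $\Sigma$ and $\mathrm{enc}(w,i)$ is $w$ with its $i$-th letter replaced by its dotted copy. An $\mathcal F$-transducer over $\Sigma$ is a tuple $(K,\phi_{\mathrm{dom}},(\psi_v)_{v\in K})$ with $K$ a finite set of words, $\phi_{\mathrm{dom}}$ an $\mathcal F$-sentence and each $\psi_v$ an $\mathcal F_{\mathsf c}$-sentence; for a non-empty $u$ satisfying $\phi_{\mathrm{dom}}$ its output is $v_1\cdots v_{|u|}$ where $(u,i)\models\psi_{v_i}$ (assumed well-defined and functional, i.e. exactly one such $v_i$ for each $i$); $f:\Sigma^+\to\Sigma^*$ is $\mathcal F$-definable if some $\mathcal F$-transducer defines it. A congruence class $\mathcal V$ assigns to each alphabet a set of finite-index congruences closed under intersection and coarser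 congruences; $f$ is $\mathcal V$-rational if realized by a functional transducer (automaton with output words on transitions, initial and final states) whose underlying automaton $\mathcal A$ has transition congruence $\approx_{\mathcal A}$ ($u\approx v$ iff for all states $p,q$, runs $p\xrightarrow{u}q$ exist iff runs $p\xrightarrow{v}q$ exist) in $\mathcal V(\Sigma)$. *)

From mathcomp Require Import all_boot.
Set Implicit Arguments. Unset Strict Implicit. Unset Printing Implicit Defensive.

Inductive term := TVar of nat | TCst.

(* MSO formulas; second-order variables are named by nats (separate namespace). *)
Inductive form (S : Type) :=
| FExSO of nat & form S
| FExFO of nat & form S
| FAnd of form S & form S
| FNot of form S
| FIn of term & nat
| FLet of S & term
| FLt of term & term
| FEq of term & term.

Arguments FIn {S}. Arguments FLet {S}. Arguments FLt {S}. Arguments FEq {S}.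

Definition tvar_is (x : nat) (t : term) : bool :=
  if t is TVar y then y == x else false.

Fixpoint fo_free (x : nat) S (phi : form S) : bool :=
  match phi with
  | FExSO _ p => fo_free x p
  | FExFO y p => (y != x) && fo_free x p
  | FAnd p q => fo_free x p || fo_free x q
  | FNot p => fo_free x p
  | FIn t _ => tvar_is x t
  | FLet _ t => tvar_is x t
  | FLt t1 t2 | FEq t1 t2 => tvar_is x t1 || tvar_is x t2
  end.

Fixpoint so_free (X : nat) S (phi : form S) : bool :=
  match phi with
  | FExSO Y p => (Y != X) && so_free X p
  | FExFO _ p => so_free X p
  | FAnd p q => so_free X p || so_free X q
  | FNot p => so_free X p
  | FIn _ Y => Y == X
  | _ => false
  end.

Definition closed S (phi : form S) : Prop :=
  forall n, ~~ fo_free n phi /\ ~~ so_free n phi.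

Definition tcfree (t : term) : bool := if t is TCst then false else true.

Fixpoint cfree S (phi : form S) : bool :=
  match phi with
  | FExSO _ p | FExFO _ p | FNot p => cfree p
  | FAnd p q => cfree p && cfree q
  | FIn t _ | FLet _ t => tcfree t
  | FLt t1 t2 | FEq t1 t2 => tcfree t1 && tcfree t2
  end.

Definition trepl (t t' : term) : Prop :=
  t' = t \/ (exists x, t = TVar x) /\ t' = TCst.

Fixpoint crepl S (phi psi : form S) : Prop :=
  match phi, psi with
  | FExSO X p, FExSO Y q => X = Y /\ crepl p q
  | FExFO x p, FExFO y q => x = y /\ crepl p q
  | FAnd p1 p2, FAnd q1 q2 => crepl p1 q1 /\ crepl p2 q2
  | FNot p, FNot q => crepl p q
  | FIn t X, FIn t' Y => trepl t t' /\ X = Y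
  | FLet a t, FLet b t' => a = b /\ trepl t t'
  | FLt t1 t2, FLt t1' t2' => trepl t1 t1' /\ trepl t2 t2'
  | FEq t1 t2, FEq t1' t2' => trepl t1 t1' /\ trepl t2 t2'
  | _, _ => False
  end.

(* positions of w are 0 .. size w - 1; c is interpreted as the nat [c];
   nu / mu are first / second-order valuations *)
Definition tval (c : nat) (nu : nat -> nat) (t : term) : nat :=
  if t is TVar x then nu x else c.

Definition upd (A : Type) (f : nat -> A) (x : nat) (a : A) : nat -> A :=
  fun y => if y == x then a else f y.

Fixpoint eval S (w : seq S) (c : nat) (nu : nat -> nat) (mu : nat -> nat -> Prop)
  (phi : form S) : Prop :=
  match phi with
  | FExSO X p => exists P : nat -> Prop,
      (forall i, P i -> i < size w) /\ eval w c nu (upd mu X P) p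
  | FExFO x p => exists i, i < size w /\ eval w c (upd nu x i) mu p
  | FAnd p q => eval w c nu mu p /\ eval w c nu mu q
  | FNot p => ~ eval w c nu mu p
  | FIn t X => mu X (tval c nu t)
  | FLet a t => onth w (tval c nu t) = Some a
  | FLt t1 t2 => tval c nu t1 < tval c nu t2
  | FEq t1 t2 => tval c nu t1 = tval c nu t2
  end.

Definition sat S (w : seq S) (phi : form S) : Prop :=
  eval w 0 (fun _ => 0) (fun _ _ => False) phi.

Definition psat S (w : seq S) (i : nat) (phi : form S) : Prop :=
  eval w i (fun _ => 0) (fun _ _ => False) phi.

Definition fragment := forall S : finType, form S -> Prop.

Definition Fsent (F : fragment) (S : finType) (phi : form S) : Prop :=
  F S phi /\ cfree phi /\ closed phi.

Definition Fcsent (F : fragment) (S : finType) (psi : form S) : Prop :=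
  (exists phi, F S phi /\ cfree phi /\ crepl phi psi) /\ closed psi.

Definition Fdef (F : fragment) (S : finType) (L : seq S -> Prop) : Prop :=
  exists phi, Fsent F phi /\ forall w, L w <-> sat w phi.

(* enc(w,i) over S + S (inr = dotted copy) *)
Definition enc (S : Type) (w : seq S) (i : nat) : seq (S + S) :=
  map (fun p : nat * S => if p.1 == i then inr p.2 else inl p.2)
      (zip (iota 0 (size w)) w).

Definition enc_lang (S : Type) (P : seq S -> nat -> Prop) : seq (S + S) -> Prop :=
  fun u => exists w i, P w i /\ u = enc w i.

(* L1 # L2 over option S, with # = None *)
Definition sharp_lang (S : Type) (L1 L2 : seq S -> Prop) : seq (option S) -> Prop :=
  fun u => exists u1 u2, L1 u1 /\ L2 u2 /\
             u = map Some u1 ++ None :: map Some u2.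

Definition is_fi_cong (S : Type) (r : seq S -> seq S -> Prop) : Prop :=
  [/\ (forall u, r u u), (forall u v, r u v -> r v u),
      (forall u v w, r u v -> r v w -> r u w),
      (forall u v x y, r u v -> r (x ++ u ++ y) (x ++ v ++ y)) &
      (exists n (rep : 'I_n -> seq S), forall u, exists k, r u (rep k))].

Definition congclass := forall S : finType, (seq S -> seq S -> Prop) -> Prop.

Definition is_cong_class (V : congclass) : Prop :=
  forall S : finType,
  [/\ (forall r, V S r -> is_fi_cong r),
      (forall r1 r2, V S r1 -> V S r2 -> V S (fun u v => r1 u v /\ r2 u v)) &
      (forall r1 r2, V S r1 -> is_fi_cong r2 -> (forall u v, r1 u v -> r2 u v) ->
                     V S r2)].

Definition recognizes (S : Type) (r : seq S -> seq S -> Prop) (L : seq S -> Prop) :=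
  forall u v, r u v -> (L u <-> L v).

Record transducer (S : finType) := Transducer {
  tstate : finType;
  ttrans : seq (tstate * S * seq S * tstate);
  tinit : pred tstate;
  tfinal : pred tstate }.
Arguments tinit {S} t _ : rename.
Arguments tfinal {S} t _ : rename.
Arguments ttrans {S} t : rename.

Fixpoint run (S : finType) (T : transducer S) (p : tstate T) (u : seq S)
  (q : tstate T) (o : seq S) : Prop :=
  match u with
  | [::] => p = q /\ o = [::]
  | a :: u' => exists r o1 o2,
      (p, a, o1, r) \in ttrans T /\ run r u' q o2 /\ o = o1 ++ o2
  end.

Definition accepts (S : finType) (T : transducer S) (u o : seq S) : Prop :=
  exists p q, tinit T p /\ tfinal T q /\ run p u q o.

Definition functional (S : finType) (T : transducer S) : Prop :=
  forall u o1 o2, accepts T u o1 -> accepts T u o2 -> o1 = o2.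

(* f : S^+ -> S^* (partial) is realized by T (only non-empty inputs matter) *)
Definition realizes (S : finType) (T : transducer S) (f : seq S -> option (seq S)) :=
  forall u, u <> [::] -> forall o, f u = Some o <-> accepts T u o.

Definition trans_cong (S : finType) (T : transducer S) (u v : seq S) : Prop :=
  forall p q : tstate T, (exists o, run p u q o) <-> (exists o, run p v q o).

Definition V_rational (V : congclass) (S : finType) (f : seq S -> option (seq S)) :=
  exists T : transducer S, [/\ functional T, realizes T f & V S (trans_cong T)].

Record Ftransducer (S : finType) := FTransducer {
  fK : seq (seq S);
  fdom : form S;
  fpsi : seq S -> form S }.

Definition Ftrans_valid (F : fragment) (S : finType) (T : Ftransducer S) : Prop :=
  Fsent F (fdom T) /\ forall v, v \in fK T -> Fcsent F (fpsi T v).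

Definition Ftrans_defines (S : finType) (T : Ftransducer S) (f : seq S -> option (seq S)) :=
  forall u, u <> [::] ->
    (sat u (fdom T) -> forall i, i < size u ->
       exists! v, v \in fK T /\ psat u i (fpsi T v)) /\
    (forall o, f u = Some o <->
       (sat u (fdom T) /\ exists vs : seq (seq S),
          [/\ size vs = size u, o = flatten vs &
              forall i, i < size u ->
                nth [::] vs i \in fK T /\ psat u i (fpsi T (nth [::] vs i))])).

Definition F_definable (F : fragment) (S : finType) (f : seq S -> option (seq S)) :=
  exists T : Ftransducer S, Ftrans_valid F T /\ Ftrans_defines T f.

From mathcomp Require Import all_boot.
From Stdlib Require Import ClassicalEpsilon.

Set Implicit Arguments. Unset Strict Implicit. Unset Printing Implicit Defensive.

(* A functional transducer can be normalised so that the output at a position depends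
   only on the transition-congruence classes of the prefix before it and the suffix
   after it: the output of a letter is how much the shortest output that can still be
   completed to an accepting run grows when the letter is read.  There are finitely many
   such segments, and "the segment at position i is v" is a property of pointed words
   whose encoding is recognized by a congruence of V, hence an F_c-sentence.
   Conversely, the domain and the finitely many pointed languages of an F-transducer are
   recognized by one congruence r of V (pointed languages through their encodings,
   restricted along the undotted letters).  The transducer whose states are pairs of
   r-classes, of the prefix read and of the suffix still to be read, computes the same
   function, and its transition congruence is coarser than r, hence lies in V. *)

Lemma cat_injr (T : Type) (s : seq T) : injective (cat s).
Proof. by elim: s => //= x s IH a b [] /IH. Qed.

Lemma cat_injl (T : Type) (s : seq T) : injective (cat^~ s).
Proof.
move=> a b /= E; have Hs : size a = size b.
  by have := congr1 size E; rewrite !size_cat => /addIn.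
by have := congr1 (take (size a)) E; rewrite take_size_cat // Hs take_size_cat.
Qed.

Lemma cat_prefix_of_size (T : Type) (a b c d : seq T) :
  a ++ c = b ++ d -> size a <= size b -> exists e, b = a ++ e.
Proof.
move=> E Hs; have := congr1 (take (size b)) E.
rewrite [take _ (b ++ d)]take_size_cat // take_cat; case: ltnP => H.
  by move: (leq_trans H Hs); rewrite ltnn.
by move=> <-; exists (take (size b - size a) c).
Qed.

Lemma cat_cons_inj (T : Type) (x x' : seq T) a a' y y' :
  x ++ a :: y = x' ++ a' :: y' -> size x = size x' -> [/\ x = x', a = a' & y = y'].
Proof.
elim: x x' => [|b x IH] [|b' x'] //=; first by case=> -> ->.
by case=> -> /IH H [/H [-> -> ->]].
Qed.

Lemma split_at (T : Type) (w : seq T) i :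
  i < size w -> exists x a y, w = x ++ a :: y /\ size x = i.
Proof.
elim: w i => [|b w IH] [|i] //= H; first by exists [::], b, w.
by have [x [a [y [-> <-]]]] := IH i H; exists (b :: x), a, y.
Qed.

Definition classicb (P : Prop) : bool :=
  if excluded_middle_informative P then true else false.

Lemma classicbP (P : Prop) : classicb P <-> P.
Proof. by rewrite /classicb; case: excluded_middle_informative. Qed.

Section FiniteIndexCongruence.
Variables (S : Type) (r : seq S -> seq S -> Prop).
Hypothesis r_fi : is_fi_cong r.

Lemma fi_cong_refl u : r u u.
Proof. by case: r_fi. Qed.

Lemma fi_cong_sym u v : r u v -> r v u.
Proof. by case: r_fi => _ Hsym _ _ _; apply: Hsym. Qed.

Lemma fi_cong_trans v u w : r u v -> r v w -> r u w.
Proof. by case: r_fi => _ _ Htr _ _; apply: Htr. Qed.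

Lemma fi_cong_cat x x' y y' : r x x' -> r y y' -> r (x ++ y) (x' ++ y').
Proof.
case: r_fi => _ _ _ Hc _ Hx Hy; apply: (@fi_cong_trans (x' ++ y)).
  by have := Hc _ _ [::] y Hx.
by have := Hc _ _ x' [::] Hy; rewrite !cats0.
Qed.

Lemma fi_cong_classifier :
  exists n (rep : 'I_n -> seq S) (cls : seq S -> 'I_n), forall u, r u (rep (cls u)).
Proof.
case: r_fi => _ _ _ _ [n [rep Hrep]]; have [k0 _] := Hrep [::].
exists n, rep, (fun u => epsilon (inhabits k0) (fun k => r u (rep k))).
by move=> u; apply: (epsilon_spec (inhabits k0) (fun k => r u (rep k))).
Qed.

End FiniteIndexCongruence.

Lemma kernel_finite_index (S : Type) (K : finType) (m : seq S -> K)
    (r : seq S -> seq S -> Prop) :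
  (forall u v, m u = m v -> r u v) ->
  exists n (rep : 'I_n -> seq S), forall u, exists k, r u (rep k).
Proof.
move=> Hm; pose rep (k : 'I_#|K|) := epsilon (inhabits [::]) (fun u => m u = enum_val k).
exists #|K|, rep => u; exists (enum_rank (m u)); apply: Hm.
have -> // := epsilon_spec (inhabits [::]) (fun v => m v = enum_val (enum_rank (m u))).
  by rewrite enum_rankK.
by exists u; rewrite enum_rankK.
Qed.

Section Runs.
Variables (S : finType) (T : transducer S).

Lemma run_cat (p q : tstate T) u v o :
  run p (u ++ v) q o <->
  exists r o1 o2, [/\ run p u r o1, run r v q o2 & o = o1 ++ o2].
Proof.
elim: u p o => [|a u IH] p o /=.
  split; first by move=> H; exists p, [::], o.
  by move=> [r [o1 [o2 [[-> ->] H ->]]]].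
split.
  move=> [r [o1 [o2 [Ht [/IH [r' [o3 [o4 [H1 H2 ->]]]] ->]]]]].
  by exists r', (o1 ++ o3), o4; split; [exists r, o1, o3|by []|rewrite catA].
move=> [r [o1 [o2 [[r' [o3 [o4 [Ht [Hr ->]]]]] H2 ->]]]].
exists r', o3, (o4 ++ o2); split => //; split; last by rewrite catA.
by apply/IH; exists r, o4, o2.
Qed.

Lemma run_ex_cat (p q : tstate T) u v :
  (exists o, run p (u ++ v) q o) <->
  exists r, (exists o, run p u r o) /\ (exists o, run r v q o).
Proof.
split; first by move=> [o /run_cat [r [o1 [o2 [H1 H2 _]]]]]; exists r; split; [exists o1|exists o2].
by move=> [r [[o1 H1] [o2 H2]]]; exists (o1 ++ o2); apply/run_cat; exists r, o1, o2.
Qed.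

Lemma trans_cong_fi : is_fi_cong (trans_cong T).
Proof.
split.
- by move=> u p q.
- by move=> u v H p q; split => /(H p q).
- by move=> u v w H1 H2 p q; split => [/(H1 p q)/(H2 p q)|/(H2 p q)/(H1 p q)].
- move=> u v x y H p q; rewrite !run_ex_cat.
  by split=> [] [r [Hx /run_ex_cat [r' [Hu Hy]]]]; exists r; split => //;
    apply/run_ex_cat; exists r'; split => //; apply/(H r r').
- pose m u : {ffun tstate T * tstate T -> bool} :=
    [ffun pq => classicb (exists o, run pq.1 u pq.2 o)].
  apply: (@kernel_finite_index _ _ m) => u v E p q.
  have := congr1 (fun g : {ffun _ -> bool} => g (p, q)) E; rewrite !ffunE /= => Epq.
  by split=> /classicbP; [rewrite Epq|rewrite -Epq] => /classicbP.
Qed.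

Lemma trans_cong_cons a u v : trans_cong T u v -> trans_cong T (a :: u) (a :: v).
Proof. exact: (fi_cong_cat trans_cong_fi (fi_cong_refl trans_cong_fi [:: a])). Qed.

Lemma trans_cong_rcons a u v :
  trans_cong T u v -> trans_cong T (u ++ [:: a]) (v ++ [:: a]).
Proof. by move=> H; apply: (fi_cong_cat trans_cong_fi H (fi_cong_refl trans_cong_fi _)). Qed.

End Runs.

Section Encoding.
Variable S : Type.

Definition dot_at (i : nat) (p : nat * S) : S + S :=
  if p.1 == i then inr p.2 else inl p.2.

Lemma dot_at_lt i k (s : seq S) :
  i < k -> map (dot_at i) (zip (iota k (size s)) s) = map inl s.
Proof.
elim: s k => [|b s IH] k //= Hik; rewrite /dot_at /= ifN ?IH ?(ltn_trans Hik) //.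
by rewrite neq_ltn Hik orbT.
Qed.

Lemma dot_at_cat_cons k (x : seq S) a y :
  map (dot_at (k + size x)) (zip (iota k (size (x ++ a :: y))) (x ++ a :: y)) =
  map inl x ++ inr a :: map inl y.
Proof.
elim: x k => [|b x IH] k /=; first by rewrite addn0 /dot_at /= eqxx dot_at_lt.
rewrite /dot_at /= ifN; first by rewrite -addSnnS IH.
by rewrite neq_ltn addnS ltnS leq_addr.
Qed.

Lemma enc_cat_cons (x : seq S) a y :
  enc (x ++ a :: y) (size x) = map inl x ++ inr a :: map inl y.
Proof. by rewrite /enc -(dot_at_cat_cons 0) add0n. Qed.

Lemma map_inl_cat_cons_inj (x x' : seq S) a a' y y' :
  map inl x ++ inr a :: map inl y = map inl x' ++ inr a' :: map inl y' :> seq (S + S) ->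
  [/\ x = x', a = a' & y = y'].
Proof.
have inl_inj : injective (@inl S S) by move=> ? ? [].
elim: x x' => [|b x IH] [|b' x'] //=; last by case=> -> /IH [-> -> ->].
by case=> -> /(inj_map inl_inj) ->.
Qed.

Variable P : seq S -> nat -> Prop.
Hypothesis P_lt : forall w i, P w i -> i < size w.

Lemma enc_langP z :
  enc_lang P z <->
  exists x a y, z = map inl x ++ inr a :: map inl y /\ P (x ++ a :: y) (size x).
Proof.
split.
  move=> [w [i [Pwi ->]]]; have [x [a [y [Ew Ei]]]] := split_at (P_lt Pwi).
  by exists x, a, y; subst; rewrite enc_cat_cons.
by move=> [x [a [y [-> Pxy]]]]; exists (x ++ a :: y), (size x); rewrite enc_cat_cons.
Qed.

Lemma enc_lang_cat_cons x a y :
  enc_lang P (map inl x ++ inr a :: map inl y) <-> P (x ++ a :: y) (size x).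
Proof.
split; last by move=> Pxy; apply/enc_langP; exists x, a, y.
by case/enc_langP=> [x' [a' [y' [/map_inl_cat_cons_inj [-> -> ->]]]]].
Qed.

End Encoding.

(** * Output segments of a functional transducer *)

Section CanonicalOutput.
Variables (S : finType) (T : transducer S).
Hypothesis T_fun : functional T.

Definition accepted (u : seq S) := exists o, accepts T u o.

Definition init_run (x : seq S) (p : tstate T) (a : seq S) :=
  exists p0, tinit T p0 /\ run p0 x p a.

Definition final_run (p : tstate T) (z : seq S) (b : seq S) :=
  exists q, tfinal T q /\ run p z q b.

Definition live_run x z p a := init_run x p a /\ exists b, final_run p z b.

Definition live_output x z a := exists p, live_run x z p a.

Definition min_output x z a :=
  live_output x z a /\ forall g, live_output x z g -> size a <= size g.

(* The output of [c] in the context [x _ y].  Functionality makes all live outputs after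
   [x] prefixes of the output on [x ++ c :: y], so the shortest one is well defined. *)
Definition segment x (c : S) y v := exists a a',
  [/\ min_output x (c :: y) a, min_output (x ++ [:: c]) y a' & a' = a ++ v].

Definition segment_at v w i := [/\ w <> [::], i < size w, accepted w &
  exists x c y, [/\ w = x ++ c :: y, size x = i & segment x c y v]].

Lemma init_final_accepts x z p a b :
  init_run x p a -> final_run p z b -> accepts T (x ++ z) (a ++ b).
Proof.
move=> [p0 [Hp0 Hx]] [q [Hq Hz]]; exists p0, q; split => //; split => //.
by apply/run_cat; exists p, a, b.
Qed.

Lemma live_output_prefix x z a :
  live_output x z a -> exists b, accepts T (x ++ z) (a ++ b).
Proof. by move=> [p [Hx [b Hz]]]; exists b; apply: init_final_accepts Hx Hz. Qed.

Lemma live_output_le_prefix x z a g :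
  live_output x z a -> live_output x z g -> size a <= size g -> exists e, g = a ++ e.
Proof.
move=> /live_output_prefix [b Hb] /live_output_prefix [b' Hb'].
by apply: cat_prefix_of_size; apply: T_fun Hb Hb'.
Qed.

Lemma min_output_uniq x z a1 a2 : min_output x z a1 -> min_output x z a2 -> a1 = a2.
Proof.
move=> [G1 M1] [G2 M2]; have [e Ee] := live_output_le_prefix G1 G2 (M1 _ G2).
have := M2 _ G1; rewrite Ee size_cat -{2}[size a1]addn0 leq_add2l leqn0 size_eq0.
by move=> /eqP ->; rewrite cats0.
Qed.

Lemma min_output_exists x z : (exists a, live_output x z a) -> exists a, min_output x z a.
Proof.
move=> [a Ha].
have Hex : exists n, classicb (exists g, live_output x z g /\ size g = n).
  by exists (size a); apply/classicbP; exists a.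
case: (ex_minnP Hex) => m /classicbP [g [Hg <-]] Hmin.
by exists g; split => // g' Hg'; apply: Hmin; apply/classicbP; exists g'.
Qed.

(* Functionality: when two states can be completed on the same suffix, the lag between
   their outputs does not depend on the prefix that led to them. *)
Lemma live_run_delay x x' z p q ap aq d ap' aq' :
  live_run x z p ap -> live_run x z q aq -> ap = aq ++ d ->
  live_run x' z p ap' -> live_run x' z q aq' -> ap' = aq' ++ d.
Proof.
move=> [Rp [bp Cp]] [Rq [bq Cq]] Ed [Rp' _] [Rq' _].
have := T_fun (init_final_accepts Rp Cp) (init_final_accepts Rq Cq).
rewrite Ed -catA => /cat_injr E.
have := T_fun (init_final_accepts Rp' Cp) (init_final_accepts Rq' Cq).
by rewrite -E catA => /cat_injl.
Qed.

Lemma live_run_trans_cong x x' z p a :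
  trans_cong T x x' -> live_run x z p a -> exists a', live_run x' z p a'.
Proof.
move=> Hx [[p0 [Hp0 Hr]] Hz]; have [a' Ha'] := (Hx p0 p).1 (ex_intro _ a Hr).
by exists a'; split => //; exists p0.
Qed.

Lemma min_output_trans_cong_left x x' z p a a' : trans_cong T x x' ->
  min_output x z a -> live_run x z p a -> live_run x' z p a' -> min_output x' z a'.
Proof.
move=> Hx [Ga Ma] Gp Gp'; split => [|g [q Gq']]; first by exists p.
have [g0 Gq] := live_run_trans_cong (fi_cong_sym (trans_cong_fi T) Hx) Gq'.
have [d Ed] := live_output_le_prefix Ga (ex_intro _ q Gq) (Ma _ (ex_intro _ q Gq)).
by rewrite (live_run_delay Gq Gp Ed Gq' Gp') size_cat leq_addr.
Qed.

Lemma live_output_trans_cong_right x z z' a :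
  trans_cong T z z' -> live_output x z a -> live_output x z' a.
Proof.
move=> Hz [p [Hx [b [q [Hq Hr]]]]]; have [b' Hb'] := (Hz p q).1 (ex_intro _ b Hr).
by exists p; split => //; exists b', q.
Qed.

Lemma min_output_trans_cong_right x z z' a :
  trans_cong T z z' -> min_output x z a -> min_output x z' a.
Proof.
move=> Hz [Ga Ma]; split; first exact: live_output_trans_cong_right Hz Ga.
by move=> g /(live_output_trans_cong_right (fi_cong_sym (trans_cong_fi T) Hz)); apply: Ma.
Qed.

Lemma segment_trans_cong_right x c y y' v :
  trans_cong T y y' -> segment x c y v -> segment x c y' v.
Proof.
move=> Hy [a [a' [M1 M2 E]]]; exists a, a'; split => //.
  exact: min_output_trans_cong_right (trans_cong_cons c Hy) M1.
exact: min_output_trans_cong_right Hy M2.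
Qed.

Lemma segment_trans_cong_left x x' c y v :
  trans_cong T x x' -> segment x c y v -> segment x' c y v.
Proof.
move=> Hx [a [a' [M1 M2 E]]].
have [[ps Gs] _] := M1; have [[qs [[p0 [Hp0 Hr]] Hy]] _] := M2.
case/run_cat: Hr => p [a1 [o1 [Hr1 Hr2 Ea']]].
have Gp : live_run x (c :: y) p a1.
  split; first by exists p0.
  case: Hy => b [q [Hq Hrq]]; exists (o1 ++ b), q; split => //.
  move: Hr2 => /= [r [o2 [o3 [Ht [[Er Eo3] Eo1]]]]]; subst r o3 o1.
  by exists qs, o2, b; rewrite cats0.
have [d Ed] := live_output_le_prefix M1.1 (ex_intro _ p Gp) (M1.2 _ (ex_intro _ p Gp)).
have Ev : v = d ++ o1 by apply: (@cat_injr _ a); rewrite -E Ea' Ed catA.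
have [as' Gs'] := live_run_trans_cong Hx Gs.
have [a1' Gp'] := live_run_trans_cong Hx Gp; have [[p1 [Hp1 Hr1']] _] := Gp'.
have Gq : live_run (x ++ [:: c]) y qs a'.
  by split => //; exists p0; split => //; apply/run_cat; exists p, a1, o1.
have Gq' : live_run (x' ++ [:: c]) y qs (a1' ++ o1).
  by split => //; exists p1; split => //; apply/run_cat; exists p, a1', o1.
exists as', (a1' ++ o1); split.
- exact: min_output_trans_cong_left Hx M1 Gs Gs'.
- exact: min_output_trans_cong_left (trans_cong_rcons c Hx) M2 Gq Gq'.
- by rewrite (live_run_delay Gp Gs Ed Gp' Gs') Ev catA.
Qed.

Lemma segment_uniq x c y v1 v2 : segment x c y v1 -> segment x c y v2 -> v1 = v2.
Proof.
move=> [a [a' [M1 M2 E]]] [b [b' [N1 N2]]].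
by rewrite -(min_output_uniq M1 N1) -(min_output_uniq M2 N2) E => /cat_injr.
Qed.

Lemma accepts_min_output x z o : accepts T (x ++ z) o -> exists a, min_output x z a.
Proof.
move=> [p0 [q [Hp0 [Hq /run_cat [p [a [b [Hx Hz _]]]]]]]].
by apply: min_output_exists; exists a, p; split; [exists p0|exists b, q].
Qed.

Lemma live_output_rcons x c y a' :
  live_output (x ++ [:: c]) y a' -> exists a e, live_output x (c :: y) a /\ a' = a ++ e.
Proof.
move=> [q [[p0 [Hp0 /run_cat [p [a [e [Hx Hc ->]]]]]] [b [qf [Hqf Hy]]]]].
exists a, e; split => //; exists p; split; first by exists p0.
by exists (e ++ b), qf; split => //; rewrite -cat1s; apply/run_cat; exists q, e, b.
Qed.

Lemma segment_exists x c y : accepted (x ++ c :: y) -> exists v, segment x c y v.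
Proof.
move=> [o Ho]; have [a Ma] := accepts_min_output Ho.
move: Ho; rewrite -cat1s catA => /accepts_min_output [a' Ma'].
have [a1 [e [G1 Ea']]] := live_output_rcons Ma'.1.
have Hs : size a <= size a' by rewrite Ea' size_cat (leq_trans (Ma.2 _ G1)) ?leq_addr.
have [b Hb] := live_output_prefix Ma.1; have [b' Hb'] := live_output_prefix Ma'.1.
rewrite -catA /= in Hb'.
have [d Ed] := cat_prefix_of_size (T_fun Hb Hb') Hs.
by exists d, a, a'.
Qed.

Lemma accepted_trans_cong u u' : trans_cong T u u' -> accepted u -> accepted u'.
Proof.
move=> H [o [p [q [Hp [Hq Hr]]]]]; have [o' Ho'] := (H p q).1 (ex_intro _ o Hr).
by exists o', p, q.
Qed.

Lemma segment_at_cat_cons v x c y :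
  segment_at v (x ++ c :: y) (size x) <-> accepted (x ++ c :: y) /\ segment x c y v.
Proof.
split=> [[_ _ HA [x' [c' [y' [E Es HS]]]]]|[HA HS]].
  by have [Ex Ec Ey] := cat_cons_inj E (esym Es); subst.
split=> //; first by case: x {HA HS}.
  by rewrite size_cat /= addnS ltnS leq_addr.
by exists x, c, y.
Qed.

Lemma segment_at_uniq v1 v2 w i : segment_at v1 w i -> segment_at v2 w i -> v1 = v2.
Proof.
move=> [_ _ _ [x [c [y [-> <- HS]]]]] /segment_at_cat_cons [_].
exact: segment_uniq.
Qed.

Lemma segment_at_exists w i : accepted w -> i < size w -> exists v, segment_at v w i.
Proof.
move=> HA /split_at [x [c [y [Ew <-]]]]; subst w.
by have [v Hv] := segment_exists HA; exists v; apply/segment_at_cat_cons.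
Qed.

Lemma segment_at_trans_cong v x x' c y y' :
  trans_cong T x x' -> trans_cong T y y' ->
  segment_at v (x ++ c :: y) (size x) -> segment_at v (x' ++ c :: y') (size x').
Proof.
move=> Hx Hy /segment_at_cat_cons [HA HS]; apply/segment_at_cat_cons; split.
  exact: accepted_trans_cong (fi_cong_cat (trans_cong_fi T) Hx (trans_cong_cons c Hy)) HA.
exact: segment_trans_cong_right Hy (segment_trans_cong_left Hx HS).
Qed.

Lemma min_output_segments w o m : accepts T w o -> m <= size w ->
  exists vs, [/\ size vs = m, min_output (take m w) (drop m w) (flatten vs) &
    forall k, k < m -> segment_at (nth [::] vs k) w k].
Proof.
move=> Hw; elim: m => [|m IH] Hm.
  exists [::]; split => //; rewrite take0 drop0; split => // {Hm}.
  case: Hw => [p0 [q [Hp0 [Hq Hr]]]]; exists p0; split; last by exists o, q.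
  by exists p0; split => //=.
have [vs [Hs HM Hk]] := IH (ltnW Hm).
have [x [c [y [Ew Ex]]]] := split_at Hm; subst w.
move: Hs HM Hk; rewrite -{}Ex => Hs HM Hk.
have [v Hv] : exists v, segment x c y v by apply: segment_exists; exists o.
have [a [a' [M1 M2 E]]] := Hv.
rewrite take_size_cat // drop_size_cat // in HM.
have Exc : (size x).+1 = size (x ++ [:: c]) by rewrite size_cat addn1.
exists (rcons vs v); split.
- by rewrite size_rcons Hs.
- have -> : x ++ c :: y = (x ++ [:: c]) ++ y by rewrite -catA.
  rewrite Exc take_size_cat // drop_size_cat // flatten_rcons.
  by rewrite (min_output_uniq HM M1) -E.
- move=> k; rewrite ltnS leq_eqVlt nth_rcons Hs => /orP [/eqP ->|Hkx].
    by rewrite ltnn eqxx; apply/segment_at_cat_cons; split => //; exists o.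
  by rewrite Hkx; apply: Hk.
Qed.

Lemma accepts_segments w o : accepts T w o ->
  exists vs, [/\ size vs = size w, flatten vs = o &
    forall k, k < size w -> segment_at (nth [::] vs k) w k].
Proof.
move=> Hw; have [vs [Hs [[p [[p0 [Hp0 Hr]] [b [q [Hq Hz]]]] _] Hk]]] :=
  min_output_segments Hw (leqnn _).
rewrite take_size drop_size in Hr Hz; case: Hz => Epq _; subst q.
by exists vs; split => //; apply: T_fun Hw; exists p0, p.
Qed.

End CanonicalOutput.

Section Definability.
Variables (V : congclass) (F : fragment).
Arguments V : clear implicits.
Hypothesis V_class : is_cong_class V.
Hypothesis Fdef_V : forall (S : finType) (L : seq S -> Prop),
  Fdef F L <-> exists r, V S r /\ recognizes r L.
Hypothesis Fdef_image : forall (S S' : finType) (h : S -> S'), injective h ->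
  forall L : seq S -> Prop,
    Fdef F L <-> Fdef F (fun u' : seq S' => exists2 u, L u & u' = map h u).
Hypothesis Fdef_sharp : forall (S : finType) (L1 L2 : seq S -> Prop),
  Fdef F L1 -> Fdef F L2 -> Fdef F (sharp_lang L1 L2).
Hypothesis Fdef_eps : forall S : finType, Fdef F (fun u : seq S => u = [::]).

Lemma V_fi (S : finType) r : V S r -> is_fi_cong r.
Proof. by case: (V_class S) => H _ _; apply: H. Qed.

Lemma V_refine_seq (S : finType) (I : eqType) (s : seq I)
    (P : I -> (seq S -> seq S -> Prop) -> Prop) :
  (forall i, i \in s -> exists r, V S r /\ P i r) ->
  exists r, V S r /\
    forall i, i \in s -> exists2 r', P i r' & forall u v, r u v -> r' u v.
Proof.
elim: s => [|j s IH] HP.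
  by have [r [Vr _]] := (Fdef_V _).1 (Fdef_eps S); exists r; split => // i; rewrite in_nil.
have [r [Vr Hr]] : exists r, V S r /\
    forall i, i \in s -> exists2 r', P i r' & forall u v, r u v -> r' u v.
  by apply: IH => i Hi; apply: HP; rewrite inE Hi orbT.
have [rj [Vrj Prj]] := HP j (mem_head j s); have [_ Vcap _] := V_class S.
exists (fun u v => rj u v /\ r u v); split; first exact: Vcap.
move=> i; rewrite inE => /predU1P [->|/Hr [r' Pr' Hrr']]; first by exists rj => // u v [].
by exists r' => // u v [_ /Hrr'].
Qed.

Lemma V_refine_fin (S : finType) (I : finType) (P : I -> (seq S -> seq S -> Prop) -> Prop) :
  (forall i, exists r, V S r /\ P i r) ->
  exists r, V S r /\ forall i, exists2 r', P i r' & forall u v, r u v -> r' u v.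
Proof.
move=> HP; have [r [Vr Hr]] := @V_refine_seq S _ (enum I) P (fun i _ => HP i).
by exists r; split => // i; apply: Hr; rewrite mem_enum.
Qed.

Lemma Fdef_ext (S : finType) (L1 L2 : seq S -> Prop) :
  (forall u, L1 u <-> L2 u) -> Fdef F L1 -> Fdef F L2.
Proof. by move=> E [phi [Hphi H]]; exists phi; split => // w; rewrite -E. Qed.

Lemma Fdef_recognized (S : finType) r (L : seq S -> Prop) : V S r -> recognizes r L -> Fdef F L.
Proof. by move=> Vr HL; apply/Fdef_V; exists r. Qed.

Lemma Fdef_union (S : finType) (I : finType) (P : I -> Prop) (L : I -> seq S -> Prop) :
  (forall i, Fdef F (L i)) -> Fdef F (fun z => exists i, P i /\ L i z).
Proof.
move=> HL; have [r [Vr Hr]] := @V_refine_fin S I (fun i r => recognizes r (L i))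
  (fun i => (Fdef_V _).1 (HL i)).
apply: (Fdef_recognized Vr) => u v Huv.
have HLi i : L i u <-> L i v by have [r' Rr' Hrr'] := Hr i; apply: Rr'; apply: Hrr'.
by split=> -[i [Pi Li]]; exists i; split => //; apply/HLi.
Qed.

Lemma Fdef_all (S : finType) : Fdef F (fun _ : seq S => True).
Proof. by have [r [Vr _]] := (Fdef_V _).1 (Fdef_eps S); apply: (Fdef_recognized Vr). Qed.

Lemma Fdef_inter (S : finType) (L1 L2 : seq S -> Prop) :
  Fdef F L1 -> Fdef F L2 -> Fdef F (fun z => L1 z /\ L2 z).
Proof.
move=> /Fdef_V [r1 [Vr1 R1]] /Fdef_V [r2 [Vr2 R2]]; have [_ Vcap _] := V_class S.
apply: (Fdef_recognized (Vcap _ _ Vr1 Vr2)) => u v [H1 H2].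
by rewrite (R1 _ _ H1) (R2 _ _ H2).
Qed.

Lemma Fdef_class (S : finType) r w0 : V S r -> Fdef F (fun u => r u w0).
Proof.
move=> Vr; apply: (Fdef_recognized Vr) => u v Huv; have Hr := V_fi Vr.
split=> H; last exact: (fi_cong_trans Hr Huv H).
exact: (fi_cong_trans Hr (fi_cong_sym Hr Huv) H).
Qed.

Lemma Fdef_preimage (S S' : finType) (h : S -> S') (L : seq S' -> Prop) :
  injective h -> Fdef F L -> Fdef F (fun u => L (map h u)).
Proof.
move=> Hh HL; apply/(Fdef_image Hh); have Himg := (Fdef_image Hh _).1 (Fdef_all S).
apply: Fdef_ext (Fdef_inter HL Himg) => u'; split.
  by move=> [Lu [u _ E]]; exists u; rewrite -?E.
by move=> [u Lu ->]; split => //; exists u.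
Qed.

Lemma Fdef_marked (S : finType) (L1 L2 : seq S -> Prop) (a : S) :
  Fdef F L1 -> Fdef F L2 ->
  Fdef F (fun z : seq (S + S) =>
    exists x y, [/\ L1 x, L2 y & z = map inl x ++ inr a :: map inl y]).
Proof.
move=> HL1 HL2; pose h (o : option S) := if o is Some b then inl b else inr a : S + S.
have Hh : injective h by move=> [b|] [b'|] //= [->].
apply: Fdef_ext ((Fdef_image Hh _).1 (Fdef_sharp HL1 HL2)) => z.
split=> [[u [x [y [Lx [Ly ->]]]] ->]|[x [y [Lx Ly ->]]]].
  by exists x, y; rewrite map_cat /= -!map_comp.
by exists (map Some x ++ None :: map Some y); [exists x, y|rewrite map_cat /= -!map_comp].
Qed.

Lemma V_restrict_inl (S : finType) r : V (S + S)%type r ->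
  exists r', V S r' /\ forall u v, r' u v -> r (map inl u) (map inl v).
Proof.
move=> Vr; have Hr := V_fi Vr; have [_ _ _ _ [n [rep Hrep]]] := Hr.
have inl_inj : injective (@inl S S) by move=> ? ? [].
have [r' [Vr' Hr']] := @V_refine_fin S 'I_n
  (fun k r' => recognizes r' (fun u => r (map inl u) (rep k)))
  (fun k => (Fdef_V _).1 (Fdef_preimage inl_inj (Fdef_class (rep k) Vr))).
exists r'; split => // u v Huv; have [k Hk] := Hrep (map inl u).
have [r'' Rk Hr''] := Hr' k.
by apply: (fi_cong_trans Hr Hk); apply: (fi_cong_sym Hr); apply/(Rk u v (Hr'' _ _ Huv)).
Qed.

Hypothesis Fcdef_enc : forall (S : finType) (P : seq S -> nat -> Prop),
  (forall w i, P w i -> w <> [::] /\ i < size w) ->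
  ((exists psi : form S, Fcsent F psi /\
      forall w i, w <> [::] -> i < size w -> (P w i <-> psat w i psi))
   <-> Fdef F (enc_lang P)).

(** * From rational transductions to F-transducers *)

Section Forward.
Variables (S : finType) (f : seq S -> option (seq S)) (T : transducer S).
Hypotheses (T_fun : functional T) (T_f : realizes T f) (VT : V S (trans_cong T)).
Variables (n : nat) (rep : 'I_n -> seq S).
Hypothesis rep_onto : forall u, exists k, trans_cong T u (rep k).

Lemma segment_at_lt v w i : segment_at T v w i -> w <> [::] /\ i < size w.
Proof. by case. Qed.

Lemma Fdef_enc_segment_at v : Fdef F (enc_lang (segment_at T v)).
Proof.
have Hlt w i : segment_at T v w i -> i < size w by case/segment_at_lt.
pose P (t : 'I_n * S * 'I_n) := segment_at T v (rep t.1.1 ++ t.1.2 :: rep t.2) (size (rep t.1.1)).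
pose L (t : 'I_n * S * 'I_n) (z : seq (S + S)) := exists x y,
  [/\ trans_cong T x (rep t.1.1), trans_cong T y (rep t.2) &
      z = map inl x ++ inr t.1.2 :: map inl y].
have HL t : Fdef F (L t) by apply: Fdef_marked; apply: Fdef_class.
apply: Fdef_ext (Fdef_union P HL) => z; have Hsym := fi_cong_sym (trans_cong_fi T).
split=> [[[[kx c] ky] [HP [x [y [Hx Hy ->]]]]]|/(enc_langP Hlt) [x [c [y [-> Hv]]]]].
  apply/(enc_lang_cat_cons Hlt).
  exact: (segment_at_trans_cong T_fun (Hsym _ _ Hx) (Hsym _ _ Hy) HP).
have [kx Hx] := rep_onto x; have [ky Hy] := rep_onto y.
by exists (kx, c, ky); split; [exact: (segment_at_trans_cong T_fun Hx Hy Hv)|exists x, y].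
Qed.

Lemma segments_finite : exists K : seq (seq S), forall v w i, segment_at T v w i -> v \in K.
Proof.
pose seg (t : 'I_n * S * 'I_n) := epsilon (inhabits [::]) (segment T (rep t.1.1) t.1.2 (rep t.2)).
exists [seq seg t | t <- enum {: 'I_n * S * 'I_n}] => v w i [_ _ _ [x [c [y [_ _ Hv]]]]].
have [kx Hx] := rep_onto x; have [ky Hy] := rep_onto y.
have Hv' := segment_trans_cong_right Hy (segment_trans_cong_left T_fun Hx Hv).
apply/mapP; exists (kx, c, ky); first by rewrite mem_enum.
exact: (segment_uniq T_fun Hv' (epsilon_spec _ _ (ex_intro _ v Hv'))).
Qed.

Lemma transducer_F_definable : F_definable F f.
Proof.
have [phi [Hphi Ephi]] : Fdef F (accepted T).
  apply: (Fdef_recognized VT) => u v Huv; split; first exact: accepted_trans_cong.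
  exact: accepted_trans_cong (fi_cong_sym (trans_cong_fi T) Huv).
pose psiP v psi := Fcsent F psi /\ forall w i, w <> [::] -> i < size w ->
  (segment_at T v w i <-> psat w i psi).
pose psi v := epsilon (inhabits (@FEq S TCst TCst)) (psiP v).
have Hpsi v : psiP v (psi v).
  apply: epsilon_spec; exact: (Fcdef_enc (@segment_at_lt v)).2 (Fdef_enc_segment_at v).
have [K HK] := segments_finite.
exists (FTransducer K phi psi); split; first by split => // v _; case: (Hpsi v).
move=> u Nu; have Hseg v i : i < size u -> segment_at T v u i <-> psat u i (psi v).
  by move=> Hi; apply: (Hpsi v).2.
split=> [/Ephi Hu i Hi|o].
  have [v Hv] := segment_at_exists T_fun Hu Hi.
  exists v; split; first by split; [exact: HK Hv|apply/(Hseg _ _ Hi)].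
  by move=> v' [_ /(Hseg _ _ Hi) Hv']; apply: (segment_at_uniq T_fun Hv Hv').
split=> [/(T_f Nu o) Hacc|[/Ephi [o' Hacc] [vs [Hs -> Hk]]]].
  have [vs [Hs Ef Hk]] := accepts_segments T_fun Hacc.
  split; first by apply/Ephi; exists o.
  by exists vs; split => // k Hk'; split; [exact: HK (Hk k Hk')|exact/(Hseg _ _ Hk')/Hk].
have [vs' [Hs' Ho' Hk']] := accepts_segments T_fun Hacc.
have -> : vs = vs'.
  apply: (eq_from_nth (x0 := [::])) => [|k]; first by rewrite Hs Hs'.
  rewrite Hs => Hk1; apply: (segment_at_uniq T_fun _ (Hk' k Hk1)).
  by apply/(Hseg _ _ Hk1); case: (Hk k Hk1).
by rewrite Ho'; apply/(T_f Nu).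
Qed.

End Forward.

Lemma V_rational_F_definable (S : finType) (f : seq S -> option (seq S)) :
  V_rational V f -> F_definable F f.
Proof.
move=> [T [T_fun T_f VT]]; have [_ _ _ _ [n [rep Hrep]]] := V_fi VT.
exact: (transducer_F_definable T_fun T_f VT Hrep).
Qed.

(** * From F-transducers to rational transductions *)

Section Backward.
Variables (S : finType) (f : seq S -> option (seq S)) (A : Ftransducer S).
Hypotheses (A_valid : Ftrans_valid F A) (A_f : Ftrans_defines A f).

Definition in_fdom (u : seq S) := sat u (fdom A).

Definition labelled v w i := [/\ w <> [::], i < size w & psat w i (fpsi A v)].

Definition label_stable (r : seq S -> seq S -> Prop) v := forall x x' y y' a,
  r x x' -> r y y' -> labelled v (x ++ a :: y) (size x) <-> labelled v (x' ++ a :: y') (size x').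

Lemma labelled_lt v w i : labelled v w i -> w <> [::] /\ i < size w.
Proof. by case. Qed.

Lemma label_stable_exists v : v \in fK A -> exists r, V S r /\ label_stable r v.
Proof.
move=> Hv; have Hlt w i : labelled v w i -> i < size w by case.
have HE : Fdef F (enc_lang (labelled v)).
  apply/(Fcdef_enc (@labelled_lt v)); exists (fpsi A v); split; first exact: A_valid.2.
  by move=> w i Nw Hi; split=> [[]|].
have [r [Vr Hr]] := (Fdef_V _).1 HE; have [r' [Vr' Hr']] := V_restrict_inl Vr.
exists r'; split => // x x' y y' a Hx Hy; have r_fi := V_fi Vr.
rewrite -!(enc_lang_cat_cons Hlt); apply: Hr; apply: (fi_cong_cat r_fi (Hr' _ _ Hx)).
exact: (fi_cong_cat r_fi (fi_cong_refl r_fi [:: inr a]) (Hr' _ _ Hy)).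
Qed.

Lemma adapted_cong_exists : exists r, [/\ V S r, recognizes r in_fdom,
  recognizes r (fun u => u = [::]) & forall v, v \in fK A -> label_stable r v].
Proof.
have [rl [Vrl Hrl]] := @V_refine_seq S _ (fK A) (fun v r => label_stable r v) label_stable_exists.
have [rd [Vrd Hrd]] : exists r, V S r /\ recognizes r in_fdom.
  by apply/Fdef_V; exists (fdom A); split => //; exact: A_valid.1.
have [re [Vre Hre]] := (Fdef_V _).1 (Fdef_eps S); have [_ Vcap _] := V_class S.
exists (fun u v => rl u v /\ rd u v /\ re u v); split.
- by apply: (Vcap) => //; apply: (Vcap).
- by move=> u v [_ [/Hrd]].
- by move=> u v [_ [_ /Hre]].
- move=> v /Hrl [r Hr Hrlr] x x' y y' a [Hx _] [Hy _].
  by apply: Hr; apply: Hrlr.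
Qed.

Section Automaton.
Variable r0 : seq S -> seq S -> Prop.
Hypotheses (Vr0 : V S r0) (r0_fdom : recognizes r0 in_fdom).
Hypotheses (r0_nil : recognizes r0 (fun u => u = [::]))
  (r0_label : forall v, v \in fK A -> label_stable r0 v).
Variables (n : nat) (rep : 'I_n -> seq S) (cls : seq S -> 'I_n).
Hypothesis rep_cls : forall u, r0 u (rep (cls u)).

Let r0_fi := V_fi Vr0.
Local Notation r0_refl := (fi_cong_refl r0_fi).
Local Notation r0_sym := (fi_cong_sym r0_fi).
Local Notation r0_trans := (fi_cong_trans r0_fi).
Local Notation r0_cat := (fi_cong_cat r0_fi).

Definition label (i : 'I_n) (a : S) (j : 'I_n) : seq S := epsilon (inhabits [::])
  (fun v => v \in fK A /\ labelled v (rep i ++ a :: rep j) (size (rep i))).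

Lemma labelP i a j : (exists v, v \in fK A /\ labelled v (rep i ++ a :: rep j) (size (rep i))) ->
  label i a j \in fK A /\ labelled (label i a j) (rep i ++ a :: rep j) (size (rep i)).
Proof. exact: epsilon_spec. Qed.

(* A state (i, j) records the class i of the prefix already read and guesses the class j
   of the suffix still to be read; a step from (i, _) to (_, j') on [a] emits the label
   of [a] in the context [rep i _ rep j']. *)
Definition state : finType := ('I_n * 'I_n)%type.

Definition step (p : state) (a : S) (q : state) : Prop :=
  r0 (rep p.1 ++ [:: a]) (rep q.1) /\ r0 (a :: rep q.2) (rep p.2).

Definition steps : seq (state * S * seq S * state) :=
  [seq (t.1.1, t.1.2, label t.1.1.1 t.1.2 t.2.2, t.2) |
     t <- enum {: state * S * state} & classicb (step t.1.1 t.1.2 t.2)].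

Lemma stepsP p a o q : (p, a, o, q) \in steps <-> step p a q /\ o = label p.1 a q.2.
Proof.
split.
  by move=> /mapP [[[p' a'] q']]; rewrite mem_filter => /andP [/classicbP Hs _] [-> -> -> ->].
move=> [Hs ->]; apply/mapP; exists (p, a, q) => //.
by rewrite mem_filter mem_enum andbT; apply/classicbP.
Qed.

Definition class_transducer : transducer S :=
  @Transducer S state steps (fun p => classicb (r0 (rep p.1) [::] /\ in_fdom (rep p.2)))
    (fun q => classicb (r0 (rep q.2) [::])).

Lemma run_classes (p q : state) u o : run (T := class_transducer) p u q o ->
  r0 (rep p.1 ++ u) (rep q.1) /\ r0 (u ++ rep q.2) (rep p.2).
Proof.
elim: u p o => [|a u IH] p o /=.
  by move=> [-> _]; rewrite cats0; split; apply: r0_refl.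
move=> [r [o1 [o2 [/stepsP [[Ha1 Ha2] _] [/IH [IH1 IH2] _]]]]]; split.
  apply: (r0_trans _ IH1); rewrite -cat1s catA.
  exact: (r0_cat Ha1 (r0_refl u)).
apply: (r0_trans _ Ha2); rewrite -cat1s -[a :: rep r.2]cat1s.
exact: (r0_cat (r0_refl [:: a]) IH2).
Qed.

Lemma run_of_classes u (p q : state) : u <> [::] ->
  r0 (rep p.1 ++ u) (rep q.1) -> r0 (u ++ rep q.2) (rep p.2) ->
  exists o, run (T := class_transducer) p u q o.
Proof.
elim: u p => [//|a [|b u] IH] p _ Hp Hq.
  exists (label p.1 a q.2), q, (label p.1 a q.2), [::].
  by rewrite cats0; split => //; apply/stepsP.
pose r : state := (cls (rep p.1 ++ [:: a]), cls ((b :: u) ++ rep q.2)).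
have Hstep : step p a r.
  rewrite /step /r /=; split; first exact: rep_cls.
  apply: (r0_trans _ Hq); rewrite -[a :: rep _]cat1s -[a :: b :: u]cat1s -catA.
  exact: (r0_cat (r0_refl _) (r0_sym (rep_cls _))).
have [o Ho] : exists o, run (T := class_transducer) r (b :: u) q o.
  apply: IH => //; rewrite /r /=.
  apply: (r0_trans _ Hp); rewrite -[a :: b :: u]cat1s catA.
  exact: (r0_cat (r0_sym (rep_cls _)) (r0_refl _)).
by exists (label p.1 a r.2 ++ o), r, (label p.1 a r.2), o; split => //; apply/stepsP.
Qed.

(* Runs on [::] only link a state to itself, so [r0] must separate the empty word. *)
Lemma trans_cong_class_transducer u v : r0 u v -> trans_cong class_transducer u v.
Proof.
move=> Huv p q; have [Eu|/eqP Nu] := eqVneq u [::].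
  by have Ev := (r0_nil Huv).1 Eu; rewrite Eu Ev.
have Nv : v <> [::] by move/(r0_nil Huv).2.
split=> -[o /run_classes [R1 R2]]; apply: run_of_classes => //.
- exact: (r0_trans (r0_cat (r0_refl _) (r0_sym Huv)) R1).
- exact: (r0_trans (r0_cat (r0_sym Huv) (r0_refl _)) R2).
- exact: (r0_trans (r0_cat (r0_refl _) Huv) R1).
- exact: (r0_trans (r0_cat Huv (r0_refl _)) R2).
Qed.

Lemma V_trans_cong_class_transducer : V S (trans_cong class_transducer).
Proof.
have [_ _ Vup] := V_class S.
exact: Vup Vr0 (trans_cong_fi class_transducer) trans_cong_class_transducer.
Qed.

Lemma run_labels u (p q : state) o x y : run (T := class_transducer) p u q o ->
  r0 (rep p.1) x -> r0 (rep q.2) y -> in_fdom (x ++ u ++ y) ->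
  exists vs, [/\ size vs = size u, o = flatten vs & forall k, k < size u ->
    nth [::] vs k \in fK A /\ psat (x ++ u ++ y) (size x + k) (fpsi A (nth [::] vs k))].
Proof.
elim: u p o x => [|a u IH] p o x /=; first by move=> [_ ->]; exists [::].
move=> [r [o1 [o2 [/stepsP [[Ha1 _] ->] [Hr ->]]]]] Hx Hy Hdom.
have Hxa : r0 (rep r.1) (x ++ [:: a]).
  exact: (r0_trans (r0_sym Ha1) (r0_cat Hx (r0_refl _))).
have [vs [Hs -> Hvs]] : exists vs, [/\ size vs = size u, o2 = flatten vs & forall k, k < size u ->
    nth [::] vs k \in fK A /\
    psat ((x ++ [:: a]) ++ u ++ y) (size (x ++ [:: a]) + k) (fpsi A (nth [::] vs k))].
  by apply: IH Hr Hxa Hy _; rewrite -catA.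
have Huy : r0 (u ++ y) (rep r.2).
  exact: (r0_trans (r0_cat (r0_refl u) (r0_sym Hy)) (run_classes Hr).2).
set w := x ++ a :: u ++ y.
have Nw : w <> [::] by rewrite /w => /(congr1 size); rewrite size_cat /= addnS.
have Hxw : size x < size w by rewrite size_cat /= addnS ltnS leq_addr.
have [v0 [[Hv0 Hlab0] _]] := (A_f Nw).1 Hdom (size x) Hxw.
have [HlK Hlab] : label p.1 a r.2 \in fK A /\
    labelled (label p.1 a r.2) (rep p.1 ++ a :: rep r.2) (size (rep p.1)).
  by apply: labelP; exists v0; split => //; apply/(r0_label Hv0 a (r0_sym Hx) Huy).
have [_ _ Hlab'] := (r0_label HlK a Hx (r0_sym Huy)).1 Hlab.
exists (label p.1 a r.2 :: vs); split => //=; first by rewrite Hs.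
move=> [|k] Hk /=; first by rewrite addn0.
by have [? ] := Hvs k Hk; rewrite -catA size_cat addn1 addSnnS.
Qed.

Definition labelling w vs := forall k, k < size w ->
  nth [::] vs k \in fK A /\ psat w k (fpsi A (nth [::] vs k)).

Lemma labelling_uniq w vs1 vs2 : w <> [::] -> in_fdom w ->
  size vs1 = size w -> size vs2 = size w -> labelling w vs1 -> labelling w vs2 -> vs1 = vs2.
Proof.
move=> Nw Hdom Hs1 Hs2 L1 L2; apply: (eq_from_nth (x0 := [::])) => [|k]; first by rewrite Hs1.
rewrite Hs1 => Hk; have [v [_ Hv]] := (A_f Nw).1 Hdom k Hk.
by rewrite -(Hv _ (L1 k Hk)) -(Hv _ (L2 k Hk)).
Qed.

Lemma accepts_labelling u o : u <> [::] -> accepts class_transducer u o ->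
  in_fdom u /\ exists vs, [/\ size vs = size u, o = flatten vs & labelling u vs].
Proof.
move=> Nu [p [q [/classicbP [Hp Hdp] [/classicbP Hq Hrun]]]].
have Hdom : in_fdom u.
  apply/(r0_fdom (r0_trans _ (run_classes Hrun).2)).2 => //.
  by rewrite -{1}[u]cats0; apply: (r0_cat (r0_refl u) (r0_sym Hq)).
split => //; have [|vs [Hs Ho Hvs]] := run_labels Hrun Hp Hq.
  by rewrite cats0.
by exists vs; split => // k /Hvs; rewrite cats0.
Qed.

Lemma class_transducer_functional : functional class_transducer.
Proof.
move=> u o1 o2; have [->|/eqP Nu] := eqVneq u [::].
  by move=> [p [q [_ [_ [_ ->]]]]] [p' [q' [_ [_ [_ ->]]]]].
move=> /(accepts_labelling Nu) [Hdom [vs1 [Hs1 -> L1]]].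
move=> /(accepts_labelling Nu) [_ [vs2 [Hs2 -> L2]]].
by rewrite (labelling_uniq Nu Hdom Hs1 Hs2 L1 L2).
Qed.

Lemma class_transducer_realizes : realizes class_transducer f.
Proof.
move=> u Nu o; rewrite ((A_f Nu).2 o); split; last exact: accepts_labelling.
move=> [Hdom [vs [Hs -> Hvs]]].
have [o' Hrun] : exists o', run (T := class_transducer) (cls [::], cls u) u (cls u, cls [::]) o'.
  apply: run_of_classes => //=.
    exact: (r0_trans (r0_cat (r0_sym (rep_cls [::])) (r0_refl u)) (rep_cls u)).
  have := r0_cat (r0_refl u) (r0_sym (rep_cls [::])); rewrite cats0 => Hu.
  exact: (r0_trans Hu (rep_cls u)).
have Hacc : accepts class_transducer u o'.
  exists (cls [::], cls u), (cls u, cls [::]).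
  split; last by split => //; apply/classicbP; apply: r0_sym.
  by apply/classicbP; split; [apply: r0_sym|apply/(r0_fdom (rep_cls u))].
have [_ [vs' [Hs' Ho' Hvs']]] := accepts_labelling Nu Hacc.
by rewrite (labelling_uniq Nu Hdom Hs Hs' Hvs Hvs') -Ho'.
Qed.

End Automaton.

Lemma F_transducer_V_rational : V_rational V f.
Proof.
have [r0 [Vr0 r0_fdom r0_nil r0_label]] := adapted_cong_exists.
have [n [rep [cls rep_cls]]] := fi_cong_classifier (V_fi Vr0).
exists (class_transducer r0 rep); split.
- exact: (class_transducer_functional Vr0 r0_fdom r0_label).
- exact: (class_transducer_realizes Vr0 r0_fdom r0_label rep_cls).
- exact: (V_trans_cong_class_transducer Vr0 r0_nil rep_cls).
Qed.

End Backward.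

Lemma F_definable_V_rational (S : finType) (f : seq S -> option (seq S)) :
  F_definable F f -> V_rational V f.
Proof. by move=> [A [A_valid A_f]]; apply: F_transducer_V_rational A_valid A_f. Qed.

End Definability.

Theorem theorem6p10 (V : congclass) (F : fragment)
  (HV : is_cong_class V)
  (Hchar : forall (S : finType) (L : seq S -> Prop),
     Fdef F L <-> exists r, V S r /\ recognizes r L)
  (H1 : forall (S : finType) (P : seq S -> nat -> Prop),
     (forall w i, P w i -> w <> [::] /\ i < size w) ->
     ((exists psi : form S, Fcsent F psi /\
         forall w i, w <> [::] -> i < size w -> (P w i <-> psat w i psi))
      <-> Fdef F (enc_lang P)))
  (H2 : forall (S S' : finType) (h : S -> S'), injective h ->
     forall L : seq S -> Prop,
       Fdef F L <-> Fdef F (fun u' : seq S' => exists2 u, L u & u' = map h u))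
  (H3 : forall (S : finType) (L1 L2 : seq S -> Prop),
     Fdef F L1 -> Fdef F L2 -> Fdef F (sharp_lang L1 L2))
  (H4 : forall S : finType, Fdef F (fun u : seq S => u = [::]))
  (S : finType) (f : seq S -> option (seq S)) :
  V_rational V f <-> F_definable F f.
Proof.
split; first exact: (V_rational_F_definable HV Hchar H2 H3 H4 H1).
exact: (F_definable_V_rational HV Hchar H2 H4 H1).
Qed.
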